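(* Let $\alpha\neq 0$ be real. Let $S$ be a spacelike surface in $\mathbb L^3$ invariant under the rotations about the $x$-axis, parametrized by $X(x,\theta)=(x,u(x)\sinh\theta,u(x)\cosh\theta)$, $x\in I$, $\theta\in\mathbb R$, with $u>0$. If $S$ is an $\alpha$-singular maximal surface, then its generating curve $z=u(x)$ in the plane $y=0$ (identified with $\mathbb L^2$) satisfies the one-dimensional $(\alpha-1)$-singular maximal equation $$\frac{u''}{1-u'^2}=\frac{\alpha-1}{u}.$$ Conversely, if $u>0$ with $u'^2<1$ satisfies $\frac{u''}{1-u'^2}=\frac{\alpha}{u}$, then the surface $X(x,\theta)=(x,u(x)\sinh\theta,u(x)\cosh\theta)$ is an $(\alpha+1)$-singular maximal surface invariant by all rotations about the $x$-axis.
   Context: $\mathbb L^3$ is $\mathbb R^3$ with the metric $dx^2+dy^2-dz^2$. A spacelike surface has Riemannian induced metric and timelike unit normal $N$; $H$ is the trace of its second fundamental form. For $\beta\in\mathbb R$, a $\beta$-singular maximal surface is a spacelike surface in the halfspace $z>0$ with $H(p)=-\beta\frac{\langle N(p),\vec a\rangle}{z}$ for all $p$, where $\vec a=(0,0,1)$ and $N$ is a unit normal field. *)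

From Stdlib Require Import Reals.
From Coquelicot Require Import Coquelicot.
Open Scope R_scope.

Definition V3 := (R * R * R)%type.
Definition mkV3 (a b c : R) : V3 := (a, b, c).
Definition v1 (v : V3) : R := fst (fst v).
Definition v2 (v : V3) : R := snd (fst v).
Definition v3 (v : V3) : R := snd v.

Definition lprod (v w : V3) : R := v1 v * v1 w + v2 v * v2 w - v3 v * v3 w.

Definition avec : V3 := mkV3 0 0 1.

Definition pdx (f : R -> R -> R) (x t : R) : R := Derive (fun s => f s t) x.
Definition pdt (f : R -> R -> R) (x t : R) : R := Derive (fun s => f x s) t.

Definition c1 (X : R -> R -> V3) : R -> R -> R := fun a b => v1 (X a b).
Definition c2 (X : R -> R -> V3) : R -> R -> R := fun a b => v2 (X a b).
Definition c3 (X : R -> R -> V3) : R -> R -> R := fun a b => v3 (X a b).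

Definition Dx (X : R -> R -> V3) : R -> R -> V3 :=
  fun x t => mkV3 (pdx (c1 X) x t) (pdx (c2 X) x t) (pdx (c3 X) x t).
Definition Dt (X : R -> R -> V3) : R -> R -> V3 :=
  fun x t => mkV3 (pdt (c1 X) x t) (pdt (c2 X) x t) (pdt (c3 X) x t).

Definition twice_partial (D : R -> R -> Prop) (f : R -> R -> R) : Prop :=
  forall x t, D x t ->
    ex_derive (fun s => f s t) x /\ ex_derive (fun s => f x s) t /\
    ex_derive (fun s => pdx f s t) x /\ ex_derive (fun s => pdx f x s) t /\
    ex_derive (fun s => pdt f s t) x /\ ex_derive (fun s => pdt f x s) t.

Definition EE (X : R -> R -> V3) x t := lprod (Dx X x t) (Dx X x t).
Definition FF (X : R -> R -> V3) x t := lprod (Dx X x t) (Dt X x t).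
Definition GG (X : R -> R -> V3) x t := lprod (Dt X x t) (Dt X x t).

Definition spacelike_param (D : R -> R -> Prop) (X : R -> R -> V3) : Prop :=
  twice_partial D (c1 X) /\ twice_partial D (c2 X) /\ twice_partial D (c3 X) /\
  forall x t, D x t ->
    0 < EE X x t /\ 0 < EE X x t * GG X x t - FF X x t ^ 2.

Definition unit_normal (X : R -> R -> V3) (N : V3) (x t : R) : Prop :=
  lprod N N = -1 /\ lprod N (Dx X x t) = 0 /\ lprod N (Dt X x t) = 0.

(* Scalar second fundamental form w.r.t. the unit timelike normal N:
   sigma(v,w) = h(v,w) N with h_ij = - <X_ij, N> (since <N,N> = -1). *)
Definition h11 (X : R -> R -> V3) (N : V3) x t := - lprod (Dx (Dx X) x t) N.
Definition h12 (X : R -> R -> V3) (N : V3) x t := - lprod (Dt (Dx X) x t) N.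
Definition h22 (X : R -> R -> V3) (N : V3) x t := - lprod (Dt (Dt X) x t) N.

Definition Hmean (X : R -> R -> V3) (N : V3) x t : R :=
  (GG X x t * h11 X N x t - 2 * FF X x t * h12 X N x t + EE X x t * h22 X N x t)
  / (EE X x t * GG X x t - FF X x t ^ 2).

Definition singular_maximal (beta : R) (D : R -> R -> Prop) (X : R -> R -> V3) : Prop :=
  spacelike_param D X /\
  (forall x t, D x t -> 0 < v3 (X x t)) /\
  exists N : R -> R -> V3, forall x t, D x t ->
    unit_normal X (N x t) x t /\
    Hmean X (N x t) x t = - beta * lprod (N x t) avec / v3 (X x t).

Definition rotX (u : R -> R) : R -> R -> V3 :=
  fun x th => mkV3 x (u x * sinh th) (u x * cosh th).

Definition rot_x (phi : R) (p : V3) : V3 :=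
  mkV3 (v1 p) (v2 p * cosh phi + v3 p * sinh phi) (v2 p * sinh phi + v3 p * cosh phi).

Definition in_interval (a b : Rbar) (x : R) : Prop := Rbar_lt a x /\ Rbar_lt x b.

(* The rotational surface X = (x, u sinh th, u cosh th) has first fundamental
   form E = 1 - u'^2, F = 0, G = u^2, and its timelike unit normals are the
   multiples N = k (u', sinh th, cosh th) with k^2 (1 - u'^2) = 1.  For such N
   one finds h11 = k u'' and h22 = k u, hence H = k (u''/(1 - u'^2) + 1/u),
   while -beta <N, a>/z = k beta / u.  So X is beta-singular maximal exactly
   when u''/(1 - u'^2) = (beta - 1)/u, which gives both directions; the boost
   of angle phi about the x-axis acts on X as the shift th |-> th + phi. *)

From Stdlib Require Import Reals Lra FunctionalExtensionality.
From Coquelicot Require Import Coquelicot.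
Open Scope R_scope.

Lemma is_derive_sinh t : is_derive sinh t (cosh t).
Proof. apply is_derive_Reals, derivable_pt_lim_sinh. Qed.

Lemma is_derive_cosh t : is_derive cosh t (sinh t).
Proof. apply is_derive_Reals, derivable_pt_lim_cosh. Qed.

Lemma Derive_sinh : Derive sinh = cosh.
Proof. extensionality t. apply is_derive_unique, is_derive_sinh. Qed.

Lemma Derive_cosh : Derive cosh = sinh.
Proof. extensionality t. apply is_derive_unique, is_derive_cosh. Qed.

Lemma cosh_sqr_sub_sinh_sqr t : cosh t ^ 2 - sinh t ^ 2 = 1.
Proof.
  unfold cosh, sinh. rewrite exp_Ropp. pose proof (exp_pos t).
  field; lra.
Qed.

Lemma cosh_pos t : 0 < cosh t.
Proof. unfold cosh. pose proof (exp_pos t); pose proof (exp_pos (- t)). lra. Qed.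

Lemma sinh_plus s t : sinh (s + t) = sinh s * cosh t + cosh s * sinh t.
Proof.
  unfold cosh, sinh. rewrite !exp_Ropp, exp_plus.
  pose proof (exp_pos s); pose proof (exp_pos t). field; lra.
Qed.

Lemma cosh_plus s t : cosh (s + t) = cosh s * cosh t + sinh s * sinh t.
Proof.
  unfold cosh, sinh. rewrite !exp_Ropp, exp_plus.
  pose proof (exp_pos s); pose proof (exp_pos t). field; lra.
Qed.

Lemma scal_cosh_sqr_sub_sinh_sqr z t : z * (cosh t ^ 2 - sinh t ^ 2) = z.
Proof. rewrite cosh_sqr_sub_sinh_sqr. ring. Qed.

Lemma pdx_mul (f g : R -> R) :
  pdx (fun x t => f x * g t) = fun x t => Derive f x * g t.
Proof. extensionality x; extensionality t. apply Derive_scal_l. Qed.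

Lemma pdt_mul (f g : R -> R) :
  pdt (fun x t => f x * g t) = fun x t => f x * Derive g t.
Proof. extensionality x; extensionality t. apply Derive_scal. Qed.

Lemma pdx_const (c : R) : pdx (fun _ _ => c) = fun _ _ => 0.
Proof. extensionality x; extensionality t. apply (Derive_const c). Qed.

Lemma pdt_const (c : R) : pdt (fun _ _ => c) = fun _ _ => 0.
Proof. extensionality x; extensionality t. apply (Derive_const c). Qed.

Lemma pdx_fst : pdx (fun x _ => x) = fun _ _ => 1.
Proof. extensionality x; extensionality t. apply Derive_id. Qed.

Lemma pdt_fst : pdt (fun x _ => x) = fun _ _ => 0.
Proof. extensionality x; extensionality t. apply (Derive_const x). Qed.

Lemma twice_partial_fst (D : R -> R -> Prop) : twice_partial D (fun x _ => x).
Proof.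
  intros x t _. rewrite pdx_fst, pdt_fst.
  repeat apply conj; auto_derive; trivial.
Qed.

Lemma twice_partial_mul (D : R -> R -> Prop) (f g : R -> R) :
  (forall x t, D x t -> ex_derive f x /\ ex_derive (Derive f) x) ->
  (forall t, ex_derive g t /\ ex_derive (Derive g) t) ->
  twice_partial D (fun x t => f x * g t).
Proof.
  intros Hf Hg x t Dxt. rewrite pdx_mul, pdt_mul.
  destruct (Hf x t Dxt) as [Hf1 Hf2], (Hg t) as [Hg1 Hg2].
  repeat apply conj; auto_derive; tauto.
Qed.

Lemma Dx_rotX u :
  Dx (rotX u) = fun x t => mkV3 1 (Derive u x * sinh t) (Derive u x * cosh t).
Proof. unfold Dx, c1, c2, c3, rotX, mkV3, v1, v2, v3; cbn. now rewrite pdx_fst, !pdx_mul. Qed.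

Lemma Dt_rotX u :
  Dt (rotX u) = fun x t => mkV3 0 (u x * cosh t) (u x * sinh t).
Proof.
  unfold Dt, c1, c2, c3, rotX, mkV3, v1, v2, v3; cbn.
  now rewrite pdt_fst, !pdt_mul, Derive_sinh, Derive_cosh.
Qed.

Lemma Dxx_rotX u :
  Dx (Dx (rotX u)) =
  fun x t => mkV3 0 (Derive (Derive u) x * sinh t) (Derive (Derive u) x * cosh t).
Proof.
  rewrite Dx_rotX. unfold Dx, c1, c2, c3, mkV3, v1, v2, v3; cbn.
  now rewrite pdx_const, !pdx_mul.
Qed.

Lemma Dtt_rotX u :
  Dt (Dt (rotX u)) = fun x t => mkV3 0 (u x * sinh t) (u x * cosh t).
Proof.
  rewrite Dt_rotX. unfold Dt, c1, c2, c3, mkV3, v1, v2, v3; cbn.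
  now rewrite pdt_const, !pdt_mul, Derive_sinh, Derive_cosh.
Qed.

Lemma EE_rotX u x t : EE (rotX u) x t = 1 - Derive u x ^ 2.
Proof.
  unfold EE, lprod. rewrite Dx_rotX. unfold mkV3, v1, v2, v3; cbn.
  pose proof (scal_cosh_sqr_sub_sinh_sqr (Derive u x ^ 2) t). lra.
Qed.

Lemma FF_rotX u x t : FF (rotX u) x t = 0.
Proof. unfold FF, lprod. rewrite Dx_rotX, Dt_rotX. unfold mkV3, v1, v2, v3; cbn. ring. Qed.

Lemma GG_rotX u x t : GG (rotX u) x t = u x ^ 2.
Proof.
  unfold GG, lprod. rewrite Dt_rotX. unfold mkV3, v1, v2, v3; cbn.
  pose proof (scal_cosh_sqr_sub_sinh_sqr (u x ^ 2) t). lra.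
Qed.

Definition rot_normal (u : R -> R) (k x t : R) : V3 :=
  mkV3 (k * Derive u x) (k * sinh t) (k * cosh t).

Lemma lprod_rot_normal u k x t :
  lprod (rot_normal u k x t) (rot_normal u k x t) = - (k ^ 2 * (1 - Derive u x ^ 2)).
Proof.
  unfold lprod, rot_normal, mkV3, v1, v2, v3; cbn.
  pose proof (scal_cosh_sqr_sub_sinh_sqr (k ^ 2) t). lra.
Qed.

Lemma unit_normal_rotX_inv u N x t :
  u x <> 0 -> unit_normal (rotX u) N x t ->
  exists k, N = rot_normal u k x t /\ k ^ 2 * (1 - Derive u x ^ 2) = 1.
Proof.
  intros Hu [HNN [HNx HNt]].
  exists (v3 N * cosh t - v2 N * sinh t).
  assert (HN : N = rot_normal u (v3 N * cosh t - v2 N * sinh t) x t).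
  { revert HNx HNt. rewrite Dx_rotX, Dt_rotX.
    destruct N as [[n1 n2] n3]. unfold lprod, rot_normal, mkV3, v1, v2, v3; cbn.
    intros HNx HNt.
    (* Orthogonality to X_th makes (n2, n3) parallel to (sinh t, cosh t). *)
    assert (Hn : n2 * cosh t = n3 * sinh t).
    { apply (Rmult_eq_reg_l (u x)); [lra | assumption]. }
    pose proof (scal_cosh_sqr_sub_sinh_sqr n2 t).
    pose proof (scal_cosh_sqr_sub_sinh_sqr n3 t).
    pose proof (f_equal (Rmult (cosh t)) Hn).
    pose proof (f_equal (Rmult (sinh t)) Hn).
    f_equal; [f_equal|]; lra. }
  split; [exact HN |].
  rewrite HN, lprod_rot_normal in HNN. lra.
Qed.

Lemma unit_normal_rotX u x t :
  Derive u x ^ 2 < 1 ->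
  unit_normal (rotX u) (rot_normal u (/ sqrt (1 - Derive u x ^ 2)) x t) x t.
Proof.
  intros Hu'. set (k := / sqrt (1 - Derive u x ^ 2)).
  assert (Hk : k ^ 2 * (1 - Derive u x ^ 2) = 1).
  { unfold k. rewrite pow_inv, <- Rsqr_pow2, Rsqr_sqrt by lra. field. lra. }
  split; [rewrite lprod_rot_normal; lra |].
  unfold lprod, rot_normal; rewrite Dx_rotX, Dt_rotX; unfold mkV3, v1, v2, v3; cbn.
  pose proof (scal_cosh_sqr_sub_sinh_sqr (k * Derive u x) t).
  split; lra.
Qed.

Lemma h11_rotX u k x t :
  h11 (rotX u) (rot_normal u k x t) x t = k * Derive (Derive u) x.
Proof.
  unfold h11, lprod, rot_normal. rewrite Dxx_rotX. unfold mkV3, v1, v2, v3; cbn.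
  pose proof (scal_cosh_sqr_sub_sinh_sqr (k * Derive (Derive u) x) t). lra.
Qed.

Lemma h22_rotX u k x t : h22 (rotX u) (rot_normal u k x t) x t = k * u x.
Proof.
  unfold h22, lprod, rot_normal. rewrite Dtt_rotX. unfold mkV3, v1, v2, v3; cbn.
  pose proof (scal_cosh_sqr_sub_sinh_sqr (k * u x) t). lra.
Qed.

Lemma Hmean_rotX u k x t :
  u x <> 0 -> Derive u x ^ 2 <> 1 ->
  Hmean (rotX u) (rot_normal u k x t) x t =
  k * (Derive (Derive u) x / (1 - Derive u x ^ 2) + / u x).
Proof.
  intros Hu Hu'.
  unfold Hmean. rewrite EE_rotX, FF_rotX, GG_rotX, h11_rotX, h22_rotX.
  field. split; [assumption | lra].
Qed.

Lemma singular_maximal_equation_rotX beta u k x t :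
  u x <> 0 -> Derive u x ^ 2 <> 1 -> k <> 0 ->
  Hmean (rotX u) (rot_normal u k x t) x t =
    - beta * lprod (rot_normal u k x t) avec / v3 (rotX u x t) <->
  Derive (Derive u) x / (1 - Derive u x ^ 2) = (beta - 1) / u x.
Proof.
  intros Hu Hu' Hk.
  assert (Hrhs : - beta * lprod (rot_normal u k x t) avec / v3 (rotX u x t) = k * (beta / u x)).
  { unfold lprod, rot_normal, avec, rotX, mkV3, v1, v2, v3; cbn.
    pose proof (cosh_pos t). field. lra. }
  rewrite Hmean_rotX, Hrhs by assumption.
  split; intros H.
  - apply Rmult_eq_reg_l in H; [| exact Hk]. unfold Rdiv in *. lra.
  - rewrite H. field. exact Hu.
Qed.

Lemma spacelike_rotX (D : R -> R -> Prop) u :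
  (forall x t, D x t -> ex_derive u x /\ ex_derive (Derive u) x) ->
  (forall x t, D x t -> u x <> 0 /\ Derive u x ^ 2 < 1) ->
  spacelike_param D (rotX u).
Proof.
  intros Hu Hreg.
  assert (Hsinh : forall t, ex_derive sinh t /\ ex_derive (Derive sinh) t).
  { intros t. rewrite Derive_sinh. split; eexists; [apply is_derive_sinh | apply is_derive_cosh]. }
  assert (Hcosh : forall t, ex_derive cosh t /\ ex_derive (Derive cosh) t).
  { intros t. rewrite Derive_cosh. split; eexists; [apply is_derive_cosh | apply is_derive_sinh]. }
  split; [exact (twice_partial_fst D) |].
  split; [exact (twice_partial_mul D u sinh Hu Hsinh) |].
  split; [exact (twice_partial_mul D u cosh Hu Hcosh) |].
  intros x t Dxt. destruct (Hreg x t Dxt) as [Hux Hu'].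
  rewrite EE_rotX, FF_rotX, GG_rotX.
  assert (0 < u x ^ 2) by (apply pow2_gt_0; exact Hux).
  split; nra.
Qed.

Lemma rot_x_rotX u phi x th : rot_x phi (rotX u x th) = rotX u x (th + phi).
Proof.
  unfold rot_x, rotX, mkV3, v1, v2, v3; cbn.
  rewrite sinh_plus, cosh_plus. f_equal; [f_equal |]; ring.
Qed.

Theorem proposition2p4 (alpha : R) (Halpha : alpha <> 0) (a b : Rbar) (u : R -> R)
  (Hu : forall x, in_interval a b x -> ex_derive u x /\ ex_derive (Derive u) x) :
  ( (forall x, in_interval a b x -> 0 < u x) ->
    singular_maximal alpha (fun x _ => in_interval a b x) (rotX u) ->
    forall x, in_interval a b x ->
      Derive (Derive u) x / (1 - (Derive u x) ^ 2) = (alpha - 1) / u x )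
  /\
  ( (forall x, in_interval a b x -> 0 < u x) ->
    (forall x, in_interval a b x -> (Derive u x) ^ 2 < 1) ->
    (forall x, in_interval a b x ->
      Derive (Derive u) x / (1 - (Derive u x) ^ 2) = alpha / u x) ->
    singular_maximal (alpha + 1) (fun x _ => in_interval a b x) (rotX u) /\
    (forall phi x th, in_interval a b x ->
      exists x' th', in_interval a b x' /\ rotX u x' th' = rot_x phi (rotX u x th)) ).
Proof.
  split.
  - intros Hpos [_ [_ [N HN]]] x Hx.
    assert (Hux : u x <> 0) by (specialize (Hpos x Hx); lra).
    destruct (HN x 0 Hx) as [Hunit Hmean].
    destruct (unit_normal_rotX_inv u (N x 0) x 0 Hux Hunit) as [k [HNk Hk]].
    rewrite HNk in Hmean.
    apply (singular_maximal_equation_rotX alpha u k x 0); [exact Hux | nra | nra | exact Hmean].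
  - intros Hpos Hu' Heq.
    split; [split; [| split] |].
    + apply spacelike_rotX; [intros x _; exact (Hu x) |].
      intros x _ Hx. split; [specialize (Hpos x Hx); lra | exact (Hu' x Hx)].
    + intros x t Hx. unfold rotX, mkV3, v3; cbn.
      pose proof (Hpos x Hx); pose proof (cosh_pos t). nra.
    + exists (fun x t => rot_normal u (/ sqrt (1 - Derive u x ^ 2)) x t).
      intros x t Hx. split; [exact (unit_normal_rotX u x t (Hu' x Hx)) |].
      assert (Hk : 0 < sqrt (1 - Derive u x ^ 2)) by (apply sqrt_lt_R0; specialize (Hu' x Hx); lra).
      apply singular_maximal_equation_rotX.
      * specialize (Hpos x Hx); lra.
      * specialize (Hu' x Hx); lra.
      * apply Rinv_neq_0_compat; lra.
      * replace (alpha + 1 - 1) with alpha by ring. exact (Heq x Hx).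
    + intros phi x th Hx. exists x, (th + phi).
      split; [exact Hx | symmetry; apply rot_x_rotX].
Qed.
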